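(* Let $\Phi\colon\mathbb{R}^d\to\mathbb{R}$ be a continuously differentiable convex function with $(L_\Phi,v)$-Hölder continuous gradient ($\|\nabla\Phi(y)-\nabla\Phi(x)\|\le L_\Phi\|y-x\|^v$ for all $x,y$, with $L_\Phi>0$, $v\in(0,1]$), let $h\colon\mathbb{R}^d\to\mathbb{R}$ be an $L_h$-Lipschitz continuous convex function, and let $f=\Phi+h$. Assume $f$ has a minimizer $x^*$ over $\mathbb{R}^d$, with $f^*=f(x^* )$. Let $g_h(x)\in\partial h(x)$ be an arbitrary subgradient, and consider the iteration $$x_{k+1}=x_k-\alpha_k\frac{\nabla\Phi(x_k)+g_h(x_k)}{\|\nabla\Phi(x_k)+g_h(x_k)\|}$$ from $x_0\in\mathbb{R}^d$, with constant step size $\alpha_k=\|x_0-x^*\|/\sqrt{T+1}$ for a fixed $T\ge0$. Then $$\min_{k=0,\dots,T}\{f(x_k)-f^*\}\le\frac{L_\Phi\|x_0-x^*\|^{v+1}}{(v+1)(T+1)^{(v+1)/2}}+\frac{2L_h\|x_0-x^*\|}{\sqrt{T+1}}.$$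
   Context: $\partial h(x)=\{g: h(y)\ge h(x)+g^T(y-x)\ \forall y\in\mathbb{R}^d\}$. The iteration is well-defined until a minimizer is found (the denominator vanishes only at a minimizer, in which case the bound holds trivially). *)

From HB Require Import structures.
From mathcomp Require Import all_boot all_order all_algebra.
From mathcomp Require Import all_classical all_reals all_analysis.
Set Implicit Arguments. Unset Strict Implicit. Unset Printing Implicit Defensive.
Import Order.TTheory GRing.Theory Num.Theory.
Import numFieldNormedType.Exports.
Local Open Scope ring_scope.

Definition dotv {R : realType} {d : nat} (u w : 'rV[R]_d) : R :=
  \sum_(i < d) u 0 i * w 0 i.
Definition norm2 {R : realType} {d : nat} (u : 'rV[R]_d) : R :=
  Num.sqrt (dotv u u).

Definition convex_fun {R : realType} {d : nat} (F : 'rV[R]_d -> R) : Prop :=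
  forall (x y : 'rV[R]_d) (t : R), 0 <= t -> t <= 1 ->
    F (t *: x + (1 - t) *: y) <= t * F x + (1 - t) * F y.

Definition is_gradient {R : realType} {d : nat} (F : 'rV[R]_d -> R)
  (G : 'rV[R]_d -> 'rV[R]_d) : Prop :=
  forall x, differentiable F x /\ ('d F x : 'rV[R]_d -> R) = dotv (G x).

Definition subgradient {R : realType} {d : nat} (H : 'rV[R]_d -> R)
  (x g : 'rV[R]_d) : Prop :=
  forall y, H x + dotv g (y - x) <= H y.

From HB Require Import structures.
From mathcomp Require Import all_boot all_order all_algebra.
From mathcomp Require Import all_classical all_reals all_analysis.
From mathcomp Require Import ring lra.
Import Order.TTheory GRing.Theory Num.Theory.
Import numFieldNormedType.Exports.
Local Open Scope ring_scope.
Local Open Scope classical_set_scope.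
Set Implicit Arguments. Unset Strict Implicit. Unset Printing Implicit Defensive.

(* Let G = grad Phi, g_k = G x_k + g_h(x_k), u_k = g_k / |g_k| and r_k = <u_k, x_k - x*>.
   Since |x_{k+1} - x*|^2 = |x_k - x*|^2 - 2 a r_k + a^2 |u_k|^2 with |u_k| <= 1, if
   r_k > a held for every k <= T the squared distance would drop by more than
   a^2 = |x_0 - x*|^2 / (T + 1) at each of T + 1 steps; so r_k <= a for some k <= T.
   The point y = x* + r_k u_k lies on the supporting hyperplane of f = Phi + h at x_k,
   hence f(x_k) <= f(y). The Hoelder descent lemma (a mean value argument) and the
   optimality condition -<G x*, w> <= L_h |w| bound f(y) - f* by
   L_Phi r_k^(v+1) / (v+1) + 2 L_h r_k, which is increasing in r_k <= a. *)

Section InnerProduct.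
Variables (R : realType) (d : nat).
Implicit Types (a : R) (u w z : 'rV[R]_d).

Lemma dotvC u w : dotv u w = dotv w u.
Proof. by apply: eq_bigr => i _; rewrite mulrC. Qed.

Lemma dotvDl u w z : dotv (u + w) z = dotv u z + dotv w z.
Proof. by rewrite /dotv -big_split; apply: eq_bigr => i _; rewrite !mxE mulrDl. Qed.

Lemma dotvZl a u w : dotv (a *: u) w = a * dotv u w.
Proof. by rewrite /dotv mulr_sumr; apply: eq_bigr => i _; rewrite !mxE mulrA. Qed.

Lemma dotvNl u w : dotv (- u) w = - dotv u w.
Proof. by rewrite -scaleN1r dotvZl mulN1r. Qed.

Lemma dotvBl u w z : dotv (u - w) z = dotv u z - dotv w z.
Proof. by rewrite dotvDl dotvNl. Qed.

Lemma dotvDr u w z : dotv z (u + w) = dotv z u + dotv z w.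
Proof. by rewrite dotvC dotvDl !(dotvC z). Qed.

Lemma dotvZr a u w : dotv w (a *: u) = a * dotv w u.
Proof. by rewrite dotvC dotvZl dotvC. Qed.

Lemma dotvNr u w : dotv w (- u) = - dotv w u.
Proof. by rewrite dotvC dotvNl dotvC. Qed.

Lemma dotvBr u w z : dotv z (u - w) = dotv z u - dotv z w.
Proof. by rewrite dotvDr dotvNr. Qed.

Lemma dot0v w : dotv 0 w = 0.
Proof. by rewrite -(scale0r 0) dotvZl mul0r. Qed.

Lemma dotvv_ge0 u : 0 <= dotv u u.
Proof. by apply: sumr_ge0 => i _; rewrite -expr2 sqr_ge0. Qed.

Lemma dotvv_eq0 u : dotv u u = 0 -> u = 0.
Proof.
move=> /psumr_eq0P uu0; apply/matrixP => i j; rewrite (ord1 i) mxE.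
have /eqP := uu0 (fun k _ => sqr_ge0 (u 0 k)) j isT.
by rewrite mulf_eq0 orbb => /eqP.
Qed.

Lemma norm2_ge0 u : 0 <= norm2 u.
Proof. exact: sqrtr_ge0. Qed.

Lemma norm2_sqr u : norm2 u ^+ 2 = dotv u u.
Proof. by rewrite sqr_sqrtr ?dotvv_ge0. Qed.

Lemma norm2_eq0 u : norm2 u = 0 -> u = 0.
Proof. by move=> u0; apply: dotvv_eq0; rewrite -norm2_sqr u0 expr0n. Qed.

Lemma norm2Z a u : 0 <= a -> norm2 (a *: u) = a * norm2 u.
Proof.
move=> a_ge0; rewrite /norm2 dotvZl dotvZr mulrA -expr2 sqrtrM ?sqr_ge0 //.
by rewrite sqrtr_sqr ger0_norm.
Qed.

Lemma norm2N u : norm2 (- u) = norm2 u.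
Proof. by rewrite /norm2 dotvNl dotvNr opprK. Qed.

Lemma dotv_le_norm2 u w : dotv u w <= norm2 u * norm2 w.
Proof.
have [u0|u_neq0] := eqVneq (norm2 u) 0; first by rewrite u0 (norm2_eq0 u0) dot0v mul0r.
have [w0|w_neq0] := eqVneq (norm2 w) 0.
  by rewrite w0 (norm2_eq0 w0) dotvC dot0v mulr0.
have u_gt0 : 0 < norm2 u by rewrite lt0r u_neq0 norm2_ge0.
have w_gt0 : 0 < norm2 w by rewrite lt0r w_neq0 norm2_ge0.
have := dotvv_ge0 (norm2 w *: u - norm2 u *: w).
rewrite !dotvBl !dotvBr !dotvZl !dotvZr -!norm2_sqr (dotvC w u) => sq_ge0.
have uw_gt0 : 0 < norm2 u * norm2 w by apply: mulr_gt0.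
nra.
Qed.

Lemma ler_norm_dotv u w : `|dotv u w| <= norm2 u * norm2 w.
Proof.
rewrite ler_norml dotv_le_norm2 andbT lerNl -dotvNl -(norm2N u).
exact: dotv_le_norm2.
Qed.

Lemma norm2_sqrB_scale a u z :
  norm2 (z - a *: u) ^+ 2 = norm2 z ^+ 2 - 2 * a * dotv u z + a ^+ 2 * norm2 u ^+ 2.
Proof. rewrite !norm2_sqr dotvBl !dotvBr !dotvZl !dotvZr (dotvC z u); ring. Qed.

Definition normalize u := (norm2 u)^-1 *: u.

Lemma norm2_normalize_le1 u : norm2 (normalize u) <= 1.
Proof.
rewrite norm2Z ?invr_ge0 ?norm2_ge0 //.
by have [->|u_neq0] := eqVneq (norm2 u) 0; rewrite ?mulr0 // mulVf.
Qed.

Lemma dotv_normalizel u w : dotv u w = norm2 u * dotv (normalize u) w.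
Proof.
rewrite dotvZl mulrA; have [u0|u_neq0] := eqVneq (norm2 u) 0.
  by rewrite (norm2_eq0 u0) dot0v mulr0.
by rewrite mulfV // mul1r.
Qed.

Lemma dotv_normalize u : dotv u (normalize u) = norm2 u.
Proof.
rewrite dotvZr -norm2_sqr expr2 mulrA.
by have [->|u_neq0] := eqVneq (norm2 u) 0; rewrite ?mulr0 // mulVf ?mul1r.
Qed.

End InnerProduct.

Section RealLine.
Variable R : realType.

Lemma derive_le_right_slope (A : R -> R) (a c : R) :
  is_derive (0 : R) 1 A a -> (forall t, 0 < t -> t <= 1 -> A t - A 0 <= t * c) ->
  a <= c.
Proof.
move=> [dA <-] slope.
have q : (fun t => t^-1 *: ((A \o shift 0) (t *: 1) - A 0)) @ 0^'+ --> 'D_1 A 0.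
  apply: cvg_trans dA => P [e /= e0 eP].
  by exists e => // t /= te /gt_eqF/negbT; exact: eP.
apply: (cvgr_to_le q); near=> t.
have t_gt0 : 0 < t by near: t; exact: nbhs_right_gt.
have t_le1 : t <= 1 by near: t; exact: nbhs_right_le.
rewrite /= [t *: 1]mulr1 addr0 -[_ *: _]/(_ * _) mulrC ler_pdivrMr // mulrC.
exact: slope.
Unshelve. all: by end_near.
Qed.

Lemma holder_taylor_ler (A A' : R -> R) (M v : R) : 0 < v ->
  (forall t : R, is_derive t 1 A (A' t)) ->
  (forall t, 0 < t -> t < 1 -> A' t - A' 0 <= M * powR t v) ->
  A 1 - A 0 - A' 0 <= M / (v + 1).
Proof.
move=> v_gt0 dA A'_holder.
have p_gt0 : 0 < v + 1 by lra.
pose B := A - A' 0 \*: id - M / (v + 1) \*: (@powR R)^~ (v + 1).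
have dB (t : R) : 0 < t -> is_derive t 1 B (A' t - A' 0 - M * powR t v).
  move=> t_gt0.
  have dlin : is_derive t 1 (A' 0 \*: id) (A' 0 *: (1 : R)) by exact: is_deriveZ.
  have dpow : is_derive t 1 (M / (v + 1) \*: (@powR R)^~ (v + 1))
      (M / (v + 1) *: ((v + 1) * powR t (v + 1 - 1))).
    exact/is_deriveZ/is_derive1_powR.
  apply: is_derive_eq (is_deriveB (is_deriveB (dA t) dlin) dpow) _.
  rewrite addrK /GRing.scale /= mulr1 mulrA divfK ?gt_eqF //.
have B_cont : {within `[0, 1], continuous B}.
  apply/continuous_within_itvP; first exact: ltr01.
  have B_cont_gt0 t : 0 < t -> {for t, continuous B}.
    by move=> /dB [dBt _]; apply/differentiable_continuous/derivable1_diffP.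
  split; first by move=> t; rewrite in_itv /= => /andP[/B_cont_gt0].
    have [dA0 _] := is_deriveB (dA 0) (is_deriveZ (A' 0) (is_derive_id (0 : R) 1)).
    apply: cvgB; first exact/cvg_at_right_filter/differentiable_continuous/derivable1_diffP.
    have -> : (M / (v + 1) \*: (@powR R)^~ (v + 1)) 0 = M / (v + 1) *: 0.
      by rewrite /= powR0 ?gt_eqF.
    by apply: cvgZl_tmp; exact: powR_cvg0.
  exact/cvg_at_left_filter/B_cont_gt0.
have [t] := MVT ltr01 (fun t t01 => dB t (andP t01).1) B_cont.
rewrite in_itv /= => /andP[t_gt0 t_lt1].
rewrite subr0 mulr1 /B !fctE /= powR1 powR0 ?gt_eqF // !scaler0 !subr0.
rewrite -[(A' 0)%:A]/(A' 0 * 1) -[_ *: 1]/(M / (v + 1) * 1) !mulr1.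
by have := A'_holder t t_gt0 t_lt1; lra.
Qed.

Lemma holder_taylor (A A' : R -> R) (M v : R) : 0 < v ->
  (forall t : R, is_derive t 1 A (A' t)) ->
  (forall t, 0 < t -> t < 1 -> `|A' t - A' 0| <= M * powR t v) ->
  `|A 1 - A 0 - A' 0| <= M / (v + 1).
Proof.
move=> v_gt0 dA A'_holder; rewrite ler_norml; apply/andP; split.
  rewrite lerNl; apply: le_trans (holder_taylor_ler (A := - A) (A' := fun t => - A' t)
    v_gt0 (fun t => is_deriveN (dA t)) _); first by rewrite !fctE; lra.
  move=> t t_gt0 t_lt1; apply: le_trans (A'_holder t t_gt0 t_lt1).
  by rewrite -opprD ler_normr lexx orbT.
apply: holder_taylor_ler v_gt0 dA _ => t t_gt0 t_lt1.
exact: le_trans (ler_norm _) (A'_holder t t_gt0 t_lt1).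
Qed.
End RealLine.

Section Gradient.
Variables (R : realType) (d : nat) (Phi : 'rV[R]_d -> R) (G : 'rV[R]_d -> 'rV[R]_d).
Hypothesis Phi_grad : is_gradient Phi G.

Lemma is_derive_line (x w : 'rV[R]_d) (t : R) :
  is_derive t 1 (fun s : R => Phi (x + s *: w)) (dotv (G (x + t *: w)) w).
Proof.
have shiftE : (fun h : R => h^-1 *: (((fun s => Phi (x + s *: w)) \o shift t) (h *: 1)
                                     - Phi (x + t *: w)))
  = (fun h : R => h^-1 *: ((Phi \o shift (x + t *: w)) (h *: w) - Phi (x + t *: w))).
  by apply/funext => h /=; rewrite [h *: 1]mulr1 scalerDl addrCA.
have [dPhi dPhiE] := Phi_grad (x + t *: w).
split; first by rewrite /derivable shiftE; exact: diff_derivable.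
by rewrite /derive shiftE -/(derive _ _ _) deriveE // dPhiE.
Qed.

Lemma is_derive_line0 (x w : 'rV[R]_d) :
  is_derive (0 : R) 1 (fun s : R => Phi (x + s *: w)) (dotv (G x) w).
Proof. by have := is_derive_line x w 0; rewrite scale0r addr0. Qed.

Lemma gradient_subgradient : convex_fun Phi -> forall x, subgradient Phi x (G x).
Proof.
move=> Phi_cvx x y; rewrite -lerBrDl.
apply: derive_le_right_slope (is_derive_line0 x (y - x)) _ => t t_gt0 t_le1.
rewrite scale0r addr0 lerBlDl.
have -> : x + t *: (y - x) = t *: y + (1 - t) *: x.
  by rewrite scalerBr scalerBl scale1r addrCA.
by apply: le_trans (Phi_cvx y x t (ltW t_gt0) t_le1) _; lra.
Qed.

Lemma minimizer_gradient_le (h : 'rV[R]_d -> R) (Lh : R) (xm : 'rV[R]_d) :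
  (forall x y, `|h y - h x| <= Lh * norm2 (y - x)) ->
  (forall y, Phi xm + h xm <= Phi y + h y) ->
  forall w, - dotv (G xm) w <= Lh * norm2 w.
Proof.
move=> h_lip xm_min w.
apply: derive_le_right_slope (is_deriveN (is_derive_line0 xm w)) _ => t t_gt0 _.
have := h_lip xm (xm + t *: w); rewrite addrAC subrr add0r (norm2Z _ (ltW t_gt0)).
have := xm_min (xm + t *: w); rewrite !fctE scale0r addr0.
have := ler_norm (h (xm + t *: w) - h xm); lra.
Qed.

Variables (L v : R).
Hypotheses (v_gt0 : 0 < v)
  (G_holder : forall x y, norm2 (G y - G x) <= L * powR (norm2 (y - x)) v).

Lemma holder_descent x w :
  `|Phi (x + w) - Phi x - dotv (G x) w| <= L / (v + 1) * powR (norm2 w) (v + 1).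
Proof.
have := holder_taylor (M := L * powR (norm2 w) (v + 1)) v_gt0 (is_derive_line x w) _.
rewrite scale1r scale0r addr0 mulrAC; apply.
move=> t t_gt0 _; rewrite -dotvBl.
apply: le_trans (ler_norm_dotv _ _) _.
have := G_holder x (x + t *: w).
rewrite addrAC subrr add0r (norm2Z _ (ltW t_gt0)) powRM ?norm2_ge0 ?(ltW t_gt0) //.
have p_neq0 : v + 1 != 0 by rewrite gt_eqF // ltr_wpDl // ltW.
rewrite powRD ?(negPf p_neq0) // powRr1 ?norm2_ge0 //.
have := norm2_ge0 w; nra.
Qed.

End Gradient.

Section Subgradient.
Variables (R : realType) (d : nat).
Implicit Types (F : 'rV[R]_d -> R) (x g c : 'rV[R]_d).

Lemma subgradientD F1 F2 x g1 g2 :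
  subgradient F1 x g1 -> subgradient F2 x g2 -> subgradient (F1 \+ F2) x (g1 + g2).
Proof. by move=> g1_sub g2_sub y; have := g1_sub y; have := g2_sub y; rewrite /= dotvDl; lra. Qed.

Lemma subgradient_proj_ge0 F x g c :
  subgradient F x g -> F c <= F x -> 0 <= dotv (normalize g) (x - c).
Proof.
move=> g_sub Fc_le; have := g_sub c.
rewrite dotvZl -opprB dotvNr => Fx_le.
by rewrite mulr_ge0 ?invr_ge0 ?norm2_ge0 //; lra.
Qed.

Lemma subgradient_le_proj F x g c :
  subgradient F x g -> F x <= F (c + dotv (normalize g) (x - c) *: normalize g).
Proof.
move=> g_sub; apply: le_trans (g_sub _); rewrite lerDl.
set r := dotv (normalize g) (x - c).
rewrite addrAC dotvDr dotvZr dotv_normalize -opprB dotvNr dotv_normalizel.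
by rewrite -/r mulrC addNr.
Qed.

End Subgradient.

Lemma exists_step_dotv_le (R : realType) (d : nat) (c : 'rV[R]_d)
    (xs u : nat -> 'rV[R]_d) (al : R) (T : nat) :
  0 <= al -> norm2 (xs 0%N - c) ^+ 2 <= T.+1%:R * al ^+ 2 ->
  (forall k, norm2 (u k) <= 1) -> (forall k, xs k.+1 = xs k - al *: u k) ->
  exists k, (k <= T)%N /\ dotv (u k) (xs k - c) <= al.
Proof.
move=> al_ge0 dist0_le u_le1 xs_step.
have [al0 | al_neq0] := eqVneq al 0.
  have dist0 : xs 0%N - c = 0.
    apply: norm2_eq0; apply/eqP; rewrite -sqrf_eq0 eq_le sqr_ge0 andbT.
    by move: dist0_le; rewrite al0 expr0n /= mulr0.
  by exists 0%N; rewrite dist0 dotvC dot0v al0.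
have al_gt0 : 0 < al by rewrite lt0r al_neq0.
case: (pselect (exists k, (k <= T)%N /\ dotv (u k) (xs k - c) <= al)) => // none.
have far k : (k <= T)%N -> al < dotv (u k) (xs k - c).
  by move=> le_kT; rewrite ltNge; apply/negP => near_k; apply: none; exists k.
pose P n := norm2 (xs n - c) ^+ 2 + n%:R * al ^+ 2.
have P_step k : (k <= T)%N -> P k.+1 < P k.
  move=> le_kT; rewrite /P xs_step addrAC norm2_sqrB_scale -[k.+1%:R]natr1.
  have u_sqr_le1 : norm2 (u k) ^+ 2 <= 1 by rewrite expr_le1 ?norm2_ge0.
  have := ler_wpM2l (sqr_ge0 al) u_sqr_le1; have := far k le_kT; nra.
have P_lt n : (n <= T)%N -> P n.+1 < P 0%N.
  elim: n => [|n IH] le_nT; first exact: P_step.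
  exact: lt_trans (P_step _ le_nT) (IH (ltnW le_nT)).
have := P_lt T (leqnn T); rewrite /P mul0r addr0.
have := sqr_ge0 (norm2 (xs T.+1 - c)); lra.
Qed.

Lemma composite_gap_le (R : realType) (d : nat) (Phi h : 'rV[R]_d -> R)
    (G : 'rV[R]_d -> 'rV[R]_d) (L v Lh : R) (xm w : 'rV[R]_d) :
  is_gradient Phi G -> 0 < v ->
  (forall x y, norm2 (G y - G x) <= L * powR (norm2 (y - x)) v) ->
  (forall x y, `|h y - h x| <= Lh * norm2 (y - x)) ->
  (forall y, Phi xm + h xm <= Phi y + h y) ->
  Phi (xm + w) + h (xm + w) - (Phi xm + h xm)
    <= L / (v + 1) * powR (norm2 w) (v + 1) + 2 * Lh * norm2 w.
Proof.
move=> Phi_grad v_gt0 G_holder h_lip xm_min.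
have := le_trans (ler_norm _) (holder_descent Phi_grad v_gt0 G_holder xm w).
have := minimizer_gradient_le Phi_grad h_lip xm_min (- w).
rewrite dotvNr opprK norm2N.
have := le_trans (ler_norm _) (h_lip xm (xm + w)); rewrite addrAC subrr add0r.
lra.
Qed.

Lemma powR_div_sqrt (R : realType) (a N p : R) : 0 <= a -> 0 < N ->
  powR (a / Num.sqrt N) p = powR a p / powR N (p / 2).
Proof.
move=> a_ge0 N_gt0; have S_gt0 : 0 < Num.sqrt N by rewrite sqrtr_gt0.
rewrite [p / 2]mulrC powRrM powR12_sqrt ?ltW //.
apply: (canRL (mulfK _)); first by rewrite gt_eqF ?powR_gt0.
by rewrite -powRM ?divfK ?gt_eqF ?divr_ge0 ?(ltW S_gt0).
Qed.

Lemma holder_lipschitz_bound_le (R : realType) (L v Lh s t : R) :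
  0 <= L -> 0 < v -> 0 <= s -> s <= t -> 0 <= Lh * t ->
  L / (v + 1) * powR s (v + 1) + 2 * Lh * s <= L / (v + 1) * powR t (v + 1) + 2 * Lh * t.
Proof.
move=> L_ge0 v_gt0 s_ge0 s_le Lh_t.
have pow_le : powR s (v + 1) <= powR t (v + 1).
  by apply: ge0_ler_powR; rewrite ?nnegrE ?(le_trans s_ge0 s_le) //; lra.
have L_pow_le := ler_wpM2l (divr_ge0 L_ge0 (ltW (ltr_wpDl (ltW v_gt0) ltr01))) pow_le.
(* A negative [Lh] forces [t <= 0], hence [s = t = 0]. *)
have [Lh_ge0 | Lh_lt0] := leP 0 Lh; first by have := ler_wpM2l Lh_ge0 s_le; lra.
have t_le0 : t <= 0 by rewrite -(nmulr_rge0 _ Lh_lt0).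
by have -> : s = t by apply/le_anti; rewrite s_le (le_trans t_le0).
Qed.

Theorem corollary2p4 (R : realType) (d : nat)
  (Phi h : 'rV[R]_d -> R) (gradPhi gh : 'rV[R]_d -> 'rV[R]_d)
  (LPhi v Lh : R) (xstar x0 : 'rV[R]_d) (T : nat) (xs : nat -> 'rV[R]_d) :
  convex_fun Phi ->
  is_gradient Phi gradPhi ->
  continuous gradPhi ->
  0 < LPhi -> 0 < v -> v <= 1 ->
  (forall x y, norm2 (gradPhi y - gradPhi x) <= LPhi * powR (norm2 (y - x)) v) ->
  convex_fun h ->
  (forall x y, `|h y - h x| <= Lh * norm2 (y - x)) ->
  (forall y, Phi xstar + h xstar <= Phi y + h y) ->
  (forall x, subgradient h x (gh x)) ->
  xs 0%N = x0 ->
  (forall k, xs k.+1 = xs k -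
     (norm2 (x0 - xstar) / Num.sqrt (T.+1)%:R) *:
       ((norm2 (gradPhi (xs k) + gh (xs k)))^-1 *: (gradPhi (xs k) + gh (xs k)))) ->
  exists k : nat, (k <= T)%N /\
    (Phi (xs k) + h (xs k)) - (Phi xstar + h xstar) <=
      LPhi * powR (norm2 (x0 - xstar)) (v + 1)
        / ((v + 1) * powR (T.+1)%:R ((v + 1) / 2))
      + 2 * Lh * norm2 (x0 - xstar) / Num.sqrt (T.+1)%:R.
Proof.
move=> Phi_cvx Phi_grad _ L_gt0 v_gt0 _ G_holder _ h_lip xstar_min gh_sub xs0 xs_step.
set D := norm2 (x0 - xstar); set S := Num.sqrt T.+1%:R; set al := D / S.
have S_gt0 : 0 < S by rewrite sqrtr_gt0 ltr0n.
have f_sub x := subgradientD (gradient_subgradient Phi_grad Phi_cvx x) (gh_sub x).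
have D_sqr : norm2 (xs 0%N - xstar) ^+ 2 <= T.+1%:R * al ^+ 2.
  by rewrite xs0 expr_div_n [S ^+ 2]sqr_sqrtr ?ler0n // mulrC divfK ?pnatr_eq0.
have [k [le_kT r_le]] := exists_step_dotv_le
  (u := fun k => normalize (gradPhi (xs k) + gh (xs k)))
  (divr_ge0 (norm2_ge0 _) (ltW S_gt0)) D_sqr (fun k => norm2_normalize_le1 _) xs_step.
exists k; split => //; move: r_le.
set n := normalize _; set r := dotv n _ => r_le.
have r_ge0 : 0 <= r by apply: subgradient_proj_ge0 (f_sub (xs k)) (xstar_min (xs k)).
have := composite_gap_le (r *: n) Phi_grad v_gt0 G_holder h_lip xstar_min.
have := subgradient_le_proj xstar (f_sub (xs k)); rewrite /= -/n -/r.
have s_le : norm2 (r *: n) <= al.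
  by rewrite norm2Z // (le_trans _ r_le) // ler_piMr // norm2_normalize_le1.
have -> : LPhi * powR D (v + 1) / ((v + 1) * powR T.+1%:R ((v + 1) / 2)) + 2 * Lh * D / S
    = LPhi / (v + 1) * powR al (v + 1) + 2 * Lh * al.
  rewrite /al powR_div_sqrt ?norm2_ge0 ?ltr0n //.
  by congr (_ + _); [rewrite invfM mulrACA | rewrite mulrA].
have Lh_al : 0 <= Lh * al.
  rewrite /al mulrA divr_ge0 ?(ltW S_gt0) //.
  exact: le_trans (normr_ge0 _) (h_lip xstar x0).
have := holder_lipschitz_bound_le (ltW L_gt0) v_gt0 (norm2_ge0 _) s_le Lh_al; lra.
Qed.
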